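(* Let $r\in\mathbb R\setminus\{0\}$, let $\varphi_0,\varphi_1,\varphi$ be positive non-degenerate quasi-concave functions on $(0,\infty)$, let $\{\widetilde t_i\}$ be a discretizing sequence for $\varphi(\varphi_0,\varphi_1)$, $\{\tau_k\}$ a discretizing sequence for $\varphi_0$ and $\{z_k\}$ a discretizing sequence for $\varphi_1$. Then there is a constant $C$ independent of $k$ such that for all $k\in\mathbb Z$ $$\sum_{i:\ \tau_k\le\widetilde t_i\le\tau_{k+1}}\Big(\frac{\varphi_1(\widetilde t_i)}{\varphi_0(\widetilde t_i)}\Big)^r\le C\sup_{i:\ \tau_k\le\widetilde t_i\le\tau_{k+1}}\Big(\frac{\varphi_1(\widetilde t_i)}{\varphi_0(\widetilde t_i)}\Big)^r,$$ $$\sum_{i:\ z_k\le\widetilde t_i\le z_{k+1}}\Big(\frac{\varphi_1(\widetilde t_i)}{\varphi_0(\widetilde t_i)}\Big)^r\le C\sup_{i:\ z_k\le\widetilde t_i\le z_{k+1}}\Big(\frac{\varphi_1(\widetilde t_i)}{\varphi_0(\widetilde t_i)}\Big)^r.$$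
   Context: A function $\psi:(0,\infty)\to(0,\infty)$ is non-degenerate quasi-concave if it is non-decreasing, $\psi(t)/t$ is non-increasing, and $\lim_{t\to0+}\psi(t)=\lim_{t\to\infty}\psi(t)/t=\lim_{t\to0+}t/\psi(t)=\lim_{t\to\infty}1/\psi(t)=0$. $\varphi(\varphi_0,\varphi_1)(t)=\varphi_0(t)\varphi(\varphi_1(t)/\varphi_0(t))$. A positive sequence is strongly increasing if $\inf_k a_{k+1}/a_k\ge2$, strongly decreasing if $\sup_k a_{k+1}/a_k\le1/2$. A strongly increasing $\{s_k\}_{k\in\mathbb Z}$ is a discretizing sequence for $\psi$ if $\{\psi(s_k)\}$ is strongly increasing, $\{\psi(s_k)/s_k\}$ is strongly decreasing, and $\mathbb Z=\mathbb Z_1\sqcup\mathbb Z_2$ with $\psi(s_{k+1})\le2\psi(s_k)$ for $k\in\mathbb Z_1$ and $\psi(s_k)/s_k\le2\psi(s_{k+1})/s_{k+1}$ for $k\in\mathbb Z_2$. *)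

From HB Require Import structures.
From mathcomp Require Import all_boot all_order all_algebra.
From mathcomp Require Import all_classical all_reals all_analysis.
Set Implicit Arguments. Unset Strict Implicit. Unset Printing Implicit Defensive.
Import Order.TTheory GRing.Theory Num.Theory.
Import numFieldNormedType.Exports.
Local Open Scope classical_set_scope.
Local Open Scope ring_scope.

(* psi : (0,oo) -> (0,oo), represented as R -> R, only its values on (0,oo) matter. *)
Definition nondeg_quasi_concave {R : realType} (psi : R -> R) : Prop :=
  [/\ (forall t, 0 < t -> 0 < psi t),
      (forall s t, 0 < s -> s <= t -> psi s <= psi t),
      (forall s t, 0 < s -> s <= t -> psi t / t <= psi s / s),
      psi t @[t --> 0^'+] --> 0 /\ psi t / t @[t --> +oo] --> 0
    & t / psi t @[t --> 0^'+] --> 0 /\ (psi t)^-1 @[t --> +oo] --> 0].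

(* phi(phi0,phi1)(t) = phi0(t) * phi(phi1(t)/phi0(t)) *)
Definition interp_fun {R : realType} (phi phi0 phi1 : R -> R) : R -> R :=
  fun t => phi0 t * phi (phi1 t / phi0 t).

Definition positive_seq {R : realType} (a : int -> R) : Prop :=
  forall k, 0 < a k.

Definition strongly_increasing {R : realType} (a : int -> R) : Prop :=
  positive_seq a /\ forall k : int, 2 <= a (k + 1) / a k.

Definition strongly_decreasing {R : realType} (a : int -> R) : Prop :=
  positive_seq a /\ forall k : int, a (k + 1) / a k <= 2^-1.

Definition discretizing_seq {R : realType} (psi : R -> R) (s : int -> R) : Prop :=
  [/\ strongly_increasing s,
      strongly_increasing (fun k => psi (s k)),
      strongly_decreasing (fun k => psi (s k) / s k)
    & exists Z1 Z2 : set int,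
        [/\ Z1 `&` Z2 = set0, Z1 `|` Z2 = setT,
            (forall k, Z1 k -> psi (s (k + 1)) <= 2 * psi (s k))
          & (forall k, Z2 k -> psi (s k) / s k <= 2 * (psi (s (k + 1)) / s (k + 1)))]].

(* Supremum of a family of nonnegative reals over an index set, in \bar R,
   with the usual convention that the supremum over the empty set is 0. *)
Definition sup_over {R : realType} (S : set int) (f : int -> R) : \bar R :=
  ereal_sup ([set 0%E] `|` [set (f i)%:E | i in S]).

From HB Require Import structures.
From mathcomp Require Import all_boot all_order all_algebra.
From mathcomp Require Import all_classical all_reals all_analysis.
From mathcomp Require Import zify ring lra.

(* Write Phi = phi(phi0,phi1) and f = phi1/phi0.  Along the discretizing
   sequence tt, Phi grows at least fourfold and Phi(t)/t shrinks at least
   fourfold every two steps.  On a block [tau_k, tau_(k+1)] the function phi0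
   is either almost constant (k in Z1) or almost linear (k in Z2); since
   Phi = phi0 * phi(f), accordingly phi(f) doubles or halves every two steps,
   and by quasi-concavity of phi so does f.  On a block [z_k, z_(k+1)] the
   same holds with Phi = phi1 * (phi(f)/f).  Hence along every block f^r is
   monotone with ratio 2^(-|r|) every two steps, and such a sum is at most a
   constant times its largest term. *)

Set Implicit Arguments. Unset Strict Implicit. Unset Printing Implicit Defensive.
Import Order.TTheory GRing.Theory Num.Theory.
Local Open Scope classical_set_scope.
Local Open Scope ring_scope.

Lemma sum_uniq_geometric_le (R : realType) (mu : R) (s : seq nat) :
  0 < mu < 1 -> uniq s -> \sum_(n <- s) mu ^+ n <= (1 - mu)^-1.
Proof.
move=> /andP[mu_gt0 mu_lt1] s_uniq.
set M := (\max_(n <- s) n).+1.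
have s_iota : perm_eq s [seq n <- iota 0 M | n \in s].
  apply: uniq_perm => //; first by rewrite filter_uniq ?iota_uniq.
  move=> n; rewrite mem_filter mem_iota /=.
  by case: (boolP (n \in s)) => // ns; rewrite ltnS (leq_bigmax_seq _ ns).
rewrite (perm_big _ s_iota) big_filter big_mkcond /=.
apply: le_trans (_ : \sum_(n <- iota 0 M) mu ^+ n <= _).
  by apply: ler_sum => n _; case: ifP => // _; rewrite exprn_ge0 // ltW.
have -> : \sum_(n <- iota 0 M) mu ^+ n = series (geometric 1 mu) M.
  by rewrite /series /= /index_iota subn0; apply: eq_bigr => n _; rewrite mul1r.
by have := geometric_le_lim M ler01 mu_gt0; rewrite gtr0_norm // mul1r; apply.
Qed.

Definition int_interval (S : set int) : Prop :=
  forall i j k, S i -> S k -> i <= j <= k -> S j.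

Section TwoStepGrowth.
Context {R : realType}.
Variables (S : set int) (g : int -> R) (mu m : R).
Hypotheses (mu_gt0 : 0 < mu) (mu_lt1 : mu < 1) (m_ge0 : 0 <= m).
Hypotheses (S_interval : int_interval S) (g_le : forall i, S i -> g i <= m).
Hypothesis g_grows : forall i, S i -> S (i + 2) -> g i <= mu ^+ 2 * g (i + 2).

(* The factor 1/mu pays for the odd distances, where only mu^(n-1) is gained. *)
Lemma two_step_growth_bound (n : nat) i :
  S i -> S (i + n%:Z) -> g i <= m / mu * mu ^+ n.
Proof.
elim/ltn_ind: n i => -[|[|n]] IH i Si Sin.
- by rewrite mulr1 (le_trans (g_le Si)) // ler_pdivlMr // ler_piMr // ltW.
- by rewrite expr1 divfK ?gt_eqF ?g_le.
- have Si2 : S (i + 2) by apply: S_interval Si Sin _; apply/andP; split; lia.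
  apply: le_trans (g_grows Si Si2) _.
  have -> : m / mu * mu ^+ n.+2 = mu ^+ 2 * (m / mu * mu ^+ n).
    by rewrite -addn2 exprD; ring.
  apply: ler_wpM2l; first by rewrite exprn_ge0 // ltW.
  apply: IH => //.
  by have -> : i + 2 + n%:Z = i + n.+2%:Z by lia.
Qed.

Lemma sum_two_step_growth s : uniq s -> (forall i, i \in s -> S i) ->
  \sum_(i <- s) g i <= mu^-1 / (1 - mu) * m.
Proof.
have C_ge0 : 0 <= mu^-1 / (1 - mu) by rewrite divr_ge0 ?invr_ge0 ?subr_ge0 ?ltW.
case: s => [|i0 s] s_uniq sS; first by rewrite big_nil mulr_ge0.
set N := \big[Order.max/i0]_(i <- i0 :: s) i.
have N_ub i : i \in i0 :: s -> i <= N by move=> /le_bigmax_seq; apply.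
have SN : S N.
  rewrite /N big_seq; elim/big_ind: _ => [|x y Sx Sy|i /sS //].
    by apply: sS; rewrite mem_head.
  by rewrite maxEle; case: ifP.
apply: le_trans (_ : \sum_(i <- i0 :: s) m / mu * mu ^+ `|N - i|%N <= _).
  rewrite big_seq [X in _ <= X]big_seq; apply: ler_sum => i si.
  apply: two_step_growth_bound; first exact: sS.
  by have -> : i + `|N - i|%N%:Z = N by have := N_ub i si; lia.
rewrite -mulr_sumr -(big_map (fun i => `|N - i|%N) xpredT (fun n => mu ^+ n)).
have -> : mu^-1 / (1 - mu) * m = m / mu * (1 - mu)^-1 by rewrite mulrC mulrA.
apply: ler_wpM2l; first by rewrite divr_ge0 // ltW.
apply: sum_uniq_geometric_le; first by rewrite mu_gt0.
by rewrite map_inj_in_uniq // => i j /N_ub iN /N_ub jN; lia.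
Qed.

End TwoStepGrowth.

Lemma sum_two_step_decay (R : realType) (S : set int) (g : int -> R) (mu m : R)
    (s : seq int) :
  0 < mu -> mu < 1 -> 0 <= m -> int_interval S -> (forall i, S i -> g i <= m) ->
  (forall i, S i -> S (i + 2) -> g (i + 2) <= mu ^+ 2 * g i) ->
  uniq s -> (forall i, i \in s -> S i) ->
  \sum_(i <- s) g i <= mu^-1 / (1 - mu) * m.
Proof.
move=> mu_gt0 mu_lt1 m_ge0 S_interval g_le g_decays s_uniq sS.
have -> : \sum_(i <- s) g i = \sum_(j <- map -%R s) g (- j).
  by rewrite big_map; apply: eq_bigr => i _; rewrite opprK.
apply: (@sum_two_step_growth _ (fun j => S (- j))) => //.
- move=> i j k Si Sk /andP[ij jk]; apply: S_interval Sk Si _.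
  by rewrite !lerN2 jk ij.
- by move=> i /g_le.
- by move=> i Si Si2; have := g_decays _ Si2; rewrite opprD subrK; apply.
- by rewrite map_inj_uniq //; apply: oppr_inj.
- by move=> _ /mapP[i si ->]; rewrite opprK; apply: sS.
Qed.

Lemma esum_le_sup_two_step (R : realType) (S : set int) (g : int -> R) (mu : R) :
  0 < mu -> mu < 1 -> int_interval S -> (forall i, S i -> 0 <= g i) ->
  (forall i, S i -> S (i + 2) -> g i <= mu ^+ 2 * g (i + 2)) \/
  (forall i, S i -> S (i + 2) -> g (i + 2) <= mu ^+ 2 * g i) ->
  (\esum_(i in S) (g i)%:E <= (mu^-1 / (1 - mu))%:E * sup_over S g)%E.
Proof.
move=> mu_gt0 mu_lt1 S_interval g_ge0 g_monotone.
have C_gt0 : 0 < mu^-1 / (1 - mu) by rewrite divr_gt0 ?invr_gt0 ?subr_gt0.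
have sup_ge0 : (0 <= sup_over S g)%E by apply: ereal_sup_ubound; left.
have g_le_sup i : S i -> ((g i)%:E <= sup_over S g)%E.
  by move=> Si; apply: ereal_sup_ubound; right; exists i.
move: sup_ge0 g_le_sup; case: (sup_over S g) => [m| |] // sup_ge0 g_le_sup;
  last by rewrite mulry gtr0_sg // mul1e leey.
have m_ge0 : 0 <= m by rewrite -lee_fin.
have g_le i : S i -> g i <= m by move=> /g_le_sup; rewrite lee_fin.
apply: ge_ereal_sup => _ [X [X_fin XS]] <-.
rewrite fsbig_finite //= sumEFin -EFinM lee_fin.
have [g_grows|g_decays] := g_monotone;
  [apply: (@sum_two_step_growth _ S) | apply: (@sum_two_step_decay _ S)] => //;
  by [exact: finmap.fset_uniq | move=> i; rewrite in_fset_set // inE => /XS].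
Qed.

Section QuasiConcave.
Context {R : realType}.
Implicit Types (psi : R -> R) (s : int -> R).

Definition quasi_concave psi : Prop :=
  [/\ forall t, 0 < t -> 0 < psi t,
      forall u v, 0 < u -> u <= v -> psi u <= psi v
    & forall u v, 0 < u -> u <= v -> psi v / v <= psi u / u].

Lemma nondeg_quasi_concaveW psi : nondeg_quasi_concave psi -> quasi_concave psi.
Proof. by case. Qed.

Lemma quasi_concave_ratio_gt0 psi0 psi1 t :
  quasi_concave psi0 -> quasi_concave psi1 -> 0 < t -> 0 < psi1 t / psi0 t.
Proof.
by case=> psi0_gt0 _ _ [psi1_gt0 _ _] t_gt0; rewrite divr_gt0 ?psi0_gt0 ?psi1_gt0.
Qed.

Lemma quasi_concave_doubled_value psi u v : quasi_concave psi ->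
  0 < u -> 0 < v -> 2 * psi v <= psi u -> 2 * v <= u.
Proof.
case=> psi_gt0 psi_mono psi_slope u_gt0 v_gt0 le_psi.
have := psi_gt0 v v_gt0; have := psi_gt0 u u_gt0.
have [uv|vu] := leP u v; first by have := psi_mono u v u_gt0 uv; nra.
have := psi_slope v u v_gt0 (ltW vu).
by rewrite ler_pdivrMr // mulrAC ler_pdivlMr //; nra.
Qed.

Lemma quasi_concave_doubled_slope psi u v : quasi_concave psi ->
  0 < u -> 0 < v -> 2 * (psi v / v) <= psi u / u -> 2 * u <= v.
Proof.
case=> psi_gt0 psi_mono psi_slope u_gt0 v_gt0 le_slope.
have psiv_gt0 := psi_gt0 v v_gt0; have psiu_gt0 := psi_gt0 u u_gt0.
have [vu|uv] := leP v u.
  have := psi_slope v u v_gt0 vu; have : 0 < psi v / v by rewrite divr_gt0.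
  lra.
have := psi_mono u v u_gt0 (ltW uv).
by move: le_slope; rewrite mulrA ler_pdivrMr // mulrAC ler_pdivlMr //; nra.
Qed.

Lemma strongly_increasing_le s : strongly_increasing s -> {homo s : i j / i <= j}.
Proof.
case=> s_gt0 s_ratio i j ij.
have [n ->] : exists n : nat, j = i + n%:Z by exists `|j - i|%N; lia.
elim: n => [|n IH]; first by rewrite addr0.
have := s_ratio (i + n%:Z); rewrite ler_pdivlMr //.
have -> : i + n%:Z + 1 = i + n.+1%:Z by lia.
by have := s_gt0 (i + n%:Z); lra.
Qed.

Lemma strongly_increasing_step2 s : strongly_increasing s ->
  forall i, 4 * s i <= s (i + 2).
Proof.
case=> s_gt0 s_ratio i.
have := s_ratio i; have := s_ratio (i + 1); rewrite -addrA !ler_pdivlMr //.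
lra.
Qed.

Lemma strongly_decreasing_step2 s : strongly_decreasing s ->
  forall i, 4 * s (i + 2) <= s i.
Proof.
case=> s_gt0 s_ratio i.
have := s_ratio i; have := s_ratio (i + 1); rewrite -addrA !ler_pdivrMr //.
by have := s_gt0 (i + 1); lra.
Qed.

Lemma strongly_increasing_int_interval s a b : strongly_increasing s ->
  int_interval [set i | a <= s i <= b].
Proof.
move=> /strongly_increasing_le s_le i j k /andP[ai _] /andP[_ kb] /andP[ij jk].
by rewrite /= (le_trans ai (s_le _ _ ij)) (le_trans (s_le _ _ jk) kb).
Qed.

Lemma discretizing_block_dichotomy psi s k :
  quasi_concave psi -> discretizing_seq psi s ->
  (forall t t', s k <= t -> t <= t' -> t' <= s (k + 1) -> psi t' <= 2 * psi t) \/
  (forall t t', s k <= t -> t <= t' -> t' <= s (k + 1) ->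
     psi t / t <= 2 * (psi t' / t')).
Proof.
case=> _ psi_mono psi_slope [[s_gt0 _] _ _ [Z1 [Z2 [_ Z12 Z1_le Z2_le]]]].
have sk_gt0 := s_gt0 k; have : (Z1 `|` Z2) k by rewrite Z12.
case=> [Z1k|Z2k]; [left|right] => t t' skt tt' t's;
  have t_gt0 := lt_le_trans sk_gt0 skt.
- have := psi_mono _ _ (lt_le_trans t_gt0 tt') t's; have := psi_mono _ _ sk_gt0 skt.
  by have := Z1_le k Z1k; lra.
- have := psi_slope _ _ (lt_le_trans t_gt0 tt') t's; have := psi_slope _ _ sk_gt0 skt.
  by have := Z2_le k Z2k; lra.
Qed.

End QuasiConcave.

Definition two_step_dyadic {R : realType} (S : set int) (x : int -> R) : Prop :=
  (forall i, S i -> S (i + 2) -> 2 * x i <= x (i + 2)) \/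
  (forall i, S i -> S (i + 2) -> 2 * x (i + 2) <= x i).

Section DyadicBlocks.
Context {R : realType}.

Lemma discretizing_block_factor_dyadic (A B Phi : R -> R) (s tt : int -> R) k :
  quasi_concave A -> discretizing_seq A s -> discretizing_seq Phi tt ->
  (forall t, 0 < t -> Phi t = A t * B t) -> (forall t, 0 < t -> 0 < B t) ->
  two_step_dyadic [set i | s k <= tt i <= s (k + 1)] (B \o tt).
Proof.
move=> A_qc A_disc [tt_inc Phi_inc Phi_dec _] PhiE B_gt0.
have [A_gt0 _ _] := A_qc.
have tt_gt0 i : 0 < tt i by case: tt_inc.
have tt_le i : tt i <= tt (i + 2) by apply: strongly_increasing_le; rewrite // lerDl.
have Phi_gap i : 4 * (A (tt i) * B (tt i)) <= A (tt (i + 2)) * B (tt (i + 2)) /\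
    4 * (A (tt (i + 2)) / tt (i + 2) * B (tt (i + 2))) <= A (tt i) / tt i * B (tt i).
  rewrite ![_ / _ * B _]mulrAC -!PhiE //.
  exact: conj (strongly_increasing_step2 Phi_inc i) (strongly_decreasing_step2 Phi_dec i).
have [A_block|A_block] := discretizing_block_dichotomy k A_qc A_disc;
  [left|right] => i /andP[ski _] /andP[_ ski2] /=;
  have [Phi_up Phi_down] := Phi_gap i; have A_le := A_block _ _ ski (tt_le i) ski2.
- have := ler_wpM2r (ltW (B_gt0 _ (tt_gt0 (i + 2)))) A_le.
  by have := A_gt0 _ (tt_gt0 i); nra.
- have := ler_wpM2r (ltW (B_gt0 _ (tt_gt0 i))) A_le.
  have : 0 < A (tt (i + 2)) / tt (i + 2) by rewrite divr_gt0 ?A_gt0.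
  nra.
Qed.

Variables (phi phi0 phi1 : R -> R) (tt : int -> R).
Hypotheses (phi_qc : quasi_concave phi) (phi0_qc : quasi_concave phi0).
Hypotheses (phi1_qc : quasi_concave phi1).
Hypothesis tt_disc : discretizing_seq (interp_fun phi phi0 phi1) tt.

Let ratio_gt0 t : 0 < t -> 0 < phi1 t / phi0 t.
Proof. exact: quasi_concave_ratio_gt0. Qed.

Lemma two_step_dyadic_ratio_phi0_block tau k : discretizing_seq phi0 tau ->
  two_step_dyadic [set i | tau k <= tt i <= tau (k + 1)]
    (fun i => phi1 (tt i) / phi0 (tt i)).
Proof.
move=> tau_disc.
have [[tt_gt0 _] _ _ _] := tt_disc; have [phi_gt0 _ _] := phi_qc.
have B_gt0 t : 0 < t -> 0 < phi (phi1 t / phi0 t) by move=> /ratio_gt0 /phi_gt0.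
have [B_dyadic|B_dyadic] :=
  discretizing_block_factor_dyadic k phi0_qc tau_disc tt_disc (fun _ _ => erefl) B_gt0;
  [left|right] => i Si Si2;
  by apply: (quasi_concave_doubled_value phi_qc); rewrite ?ratio_gt0 //; apply: B_dyadic.
Qed.

Lemma two_step_dyadic_ratio_phi1_block z k : discretizing_seq phi1 z ->
  two_step_dyadic [set i | z k <= tt i <= z (k + 1)]
    (fun i => phi1 (tt i) / phi0 (tt i)).
Proof.
move=> z_disc.
have [[tt_gt0 _] _ _ _] := tt_disc; have [phi_gt0 _ _] := phi_qc.
have [[phi0_gt0 _ _] [phi1_gt0 _ _]] := (phi0_qc, phi1_qc).
have PhiE t : 0 < t -> interp_fun phi phi0 phi1 t =
    phi1 t * (phi (phi1 t / phi0 t) / (phi1 t / phi0 t)).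
  move=> t_gt0; have := phi0_gt0 t t_gt0; have := phi1_gt0 t t_gt0.
  by rewrite /interp_fun => ? ?; field; rewrite !gt_eqF.
have B_gt0 t : 0 < t -> 0 < phi (phi1 t / phi0 t) / (phi1 t / phi0 t).
  by move=> t_gt0; rewrite divr_gt0 ?phi_gt0 ?ratio_gt0.
have [B_dyadic|B_dyadic] :=
  discretizing_block_factor_dyadic k phi1_qc z_disc tt_disc PhiE B_gt0;
  [right|left] => i Si Si2;
  by apply: (quasi_concave_doubled_slope phi_qc); rewrite ?ratio_gt0 //; apply: B_dyadic.
Qed.

End DyadicBlocks.

Section PowerSums.
Context {R : realType}.

Lemma powR_le_doubled (r x y : R) : 0 < r -> 0 < x -> 2 * x <= y ->
  x `^ r <= 2 `^ (- r) * y `^ r.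
Proof.
move=> r_gt0 x_gt0 le_xy.
have two_x_ge0 : 0 <= 2 * x by rewrite mulr_ge0 // ltW.
rewrite powRN mulrC ler_pdivlMr ?powR_gt0 // -powRM // ?(ltW x_gt0) // mulrC.
by apply: ge0_ler_powR; rewrite ?nnegrE ?(le_trans two_x_ge0 le_xy) // ltW.
Qed.

Lemma powR_ge_doubled (r x y : R) : r < 0 -> 0 < x -> 2 * x <= y ->
  y `^ r <= 2 `^ r * x `^ r.
Proof.
move=> r_lt0 x_gt0 le_xy.
have y_gt0 : 0 < y by apply: lt_le_trans le_xy; rewrite mulr_gt0.
have := @powR_le_doubled (- r) x y; rewrite oppr_gt0 opprK.
move=> /(_ r_lt0 x_gt0 le_xy).
by rewrite !powRN ler_pdivlMr ?powR_gt0 // mulrC ler_pdivrMr ?powR_gt0.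
Qed.

Lemma exists_esum_powR_le_sup (r : R) : r != 0 ->
  exists C : R, forall (S : set int) (x : int -> R),
    int_interval S -> (forall i, S i -> 0 < x i) -> two_step_dyadic S x ->
    (\esum_(i in S) (x i `^ r)%R%:E <= C%:E * sup_over S (fun i => x i `^ r)%R)%E.
Proof.
move=> r_neq0; set mu := Num.sqrt (2 `^ (- `|r|)).
have mu2 : mu ^+ 2 = 2 `^ (- `|r|) by rewrite sqr_sqrtr ?powR_ge0.
have mu_gt0 : 0 < mu by rewrite sqrtr_gt0 powR_gt0.
have mu_lt1 : mu < 1.
  rewrite -(@expr_lt1 _ 2) ?(ltW mu_gt0) // mu2 /powR pnatr_eq0 /= expR_lt1.
  by rewrite mulNr oppr_lt0 mulr_gt0 ?normr_gt0 // ln_gt0 // ltr1n.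
exists (mu^-1 / (1 - mu)) => S x S_interval x_gt0 x_dyadic.
apply: esum_le_sup_two_step => //; first by move=> i /x_gt0 /ltW; rewrite powR_ge0.
rewrite mu2; have [r_lt0|r_gt0|r_eq0] := ltgtP r 0; last by rewrite r_eq0 eqxx in r_neq0.
- rewrite ltr0_norm // opprK.
  case: x_dyadic => x_mono; [right|left] => i Si Si2;
    by apply: powR_ge_doubled; rewrite ?x_gt0 //; apply: x_mono.
- rewrite gtr0_norm //.
  case: x_dyadic => x_mono; [left|right] => i Si Si2;
    by apply: powR_le_doubled; rewrite ?x_gt0 //; apply: x_mono.
Qed.

End PowerSums.

Theorem lemma3p7 (R : realType) (r : R) (phi0 phi1 phi : R -> R)
    (tt tau z : int -> R) :
  r != 0 ->
  nondeg_quasi_concave phi0 -> nondeg_quasi_concave phi1 ->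
  nondeg_quasi_concave phi ->
  discretizing_seq (interp_fun phi phi0 phi1) tt ->
  discretizing_seq phi0 tau ->
  discretizing_seq phi1 z ->
  exists C : R, forall k : int,
    ((\esum_(i in [set i | (tau k <= tt i <= tau (k + 1))%R])
        ((phi1 (tt i) / phi0 (tt i)) `^ r)%R%:E)
      <= C%:E * sup_over [set i | (tau k <= tt i <= tau (k + 1))%R]
                  (fun i => (phi1 (tt i) / phi0 (tt i)) `^ r)%R)%E /\
    ((\esum_(i in [set i | (z k <= tt i <= z (k + 1))%R])
        ((phi1 (tt i) / phi0 (tt i)) `^ r)%R%:E)
      <= C%:E * sup_over [set i | (z k <= tt i <= z (k + 1))%R]
                  (fun i => (phi1 (tt i) / phi0 (tt i)) `^ r)%R)%E.
Proof.
move=> r_neq0 /nondeg_quasi_concaveW phi0_qc /nondeg_quasi_concaveW phi1_qc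
  /nondeg_quasi_concaveW phi_qc tt_disc tau_disc z_disc.
have [C esum_le] := exists_esum_powR_le_sup r_neq0.
have [tt_inc _ _ _] := tt_disc; have [tt_gt0 _] := tt_inc.
exists C => k; split; apply: esum_le;
  try by [exact: strongly_increasing_int_interval
         | move=> i _; apply: quasi_concave_ratio_gt0].
- exact (two_step_dyadic_ratio_phi0_block phi_qc phi0_qc phi1_qc tt_disc k tau_disc).
- exact (two_step_dyadic_ratio_phi1_block phi_qc phi0_qc phi1_qc tt_disc k z_disc).
Qed.
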